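(* Let $m,n\ge2$ and $W$ a channel from $\{1,\dots,m\}$ to $\{1,\dots,n\}$. (i) If $m\le n$, define for each $j$: $\beta'_j=\frac{(\mathbf{1}W)_j-1}{\mathrm{w}(W_{*,j})-1}$ if $\mathrm{w}(W_{*,j})>1$ and $\beta'_j=0$ otherwise, and $\beta=\max(0,\max_j\beta'_j)$. Then $\overline{P}_W(m)\le 1-\beta$, and if $\beta=0$ then $\overline{P}_W(m)=1$. (ii) If $m\ge n$, let $h=\min(1,\min_{1\le j\le n}(\mathbf{1}W)_j)$. Then $\overline{P}_W(n)\le h$, and if $h=1$ then $\overline{P}_W(n)=1$.
   Context: A channel is a row-stochastic matrix; $\mathcal{D}$ is the set of deterministic (0-1) channels from $\{1,\dots,m\}$ to $\{1,\dots,n\}$, $\mathrm{rank}(D)$ the matrix rank. $\Lambda(W)=\{\lambda\text{ probability distribution on }\mathcal{D}: W=\sum_D\lambda_DD\}$, $P_\lambda(r)=\lambda(\{D:\mathrm{rank}(D)=r\})$, $\overline{P}_W(r)=\max_{\lambda\in\Lambda(W)}P_\lambda(r)$. $\mathbf{1}$ is the all-one row vector of length $m$ ($\mathbf{1}W$ = column sums), $W_{*,j}$ is the $j$-th column, and $\mathrm{w}(x)$ is the number of nonzero entries of $x$. *)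

From HB Require Import structures.
From mathcomp Require Import all_boot all_order all_algebra.
From mathcomp Require Import classical_sets reals.
Set Implicit Arguments. Unset Strict Implicit. Unset Printing Implicit Defensive.
Import Order.TTheory GRing.Theory Num.Theory.
Local Open Scope ring_scope.
Local Open Scope classical_set_scope.

Section Defs.
Variables (R : realType) (m n : nat).

Definition channel (W : 'M[R]_(m, n)) : Prop :=
  (forall i j, 0 <= W i j) /\ (forall i, \sum_(j < n) W i j = 1).

(* deterministic channels are indexed by functions {1..m} -> {1..n} *)
Definition detmx (f : {ffun 'I_m -> 'I_n}) : 'M[R]_(m, n) :=
  \matrix_(i, j) (f i == j)%:R.

Definition in_Lambda (W : 'M[R]_(m, n)) (l : {ffun {ffun 'I_m -> 'I_n} -> R}) : Prop :=
  (forall f, 0 <= l f) /\ \sum_f l f = 1 /\ W = \sum_f l f *: detmx f.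

Definition P_lambda (l : {ffun {ffun 'I_m -> 'I_n} -> R}) (r : nat) : R :=
  \sum_(f | \rank (detmx f) == r) l f.

(* \overline{P}_W(r) = max over Lambda(W) (taken as sup; the max is attained) *)
Definition Pbar (W : 'M[R]_(m, n)) (r : nat) : R :=
  sup [set x | exists l, in_Lambda W l /\ x = P_lambda l r].

Definition colsum (W : 'M[R]_(m, n)) (j : 'I_n) : R := \sum_(i < m) W i j.

Definition colweight (W : 'M[R]_(m, n)) (j : 'I_n) : nat := #|[set i | W i j != 0]|.

Definition beta' (W : 'M[R]_(m, n)) (j : 'I_n) : R :=
  if (1 < colweight W j)%N then (colsum W j - 1) / ((colweight W j)%:R - 1) else 0.

Definition beta (W : 'M[R]_(m, n)) : R := \big[Num.max/0]_(j < n) beta' W j.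

Definition hval (W : 'M[R]_(m, n)) : R := \big[Num.min/1]_(j < n) colsum W j.

End Defs.

(* For (i) and (ii) expand (1W)_j = \sum_D lambda_D (1D)_j. A deterministic
   channel of rank m is injective, so its column sums are at most 1; one of
   rank n is surjective, so they are at least 1; and a D with lambda_D > 0 has
   its j-th column supported inside that of W, so (1D)_j <= w(W_{*,j}).

   For the equality cases, the channels with s((1W)_j - 1) <= 0 for all j form
   a polytope with deterministic vertices. If W is not deterministic, its
   fractional entries support a nonzero E with zero row sums and zero column
   sums on the tight columns (those with (1W)_j = 1): every row and every tight
   column meeting a fractional entry meets at least two, so double counting
   gives more fractional entries than equations. Moving from W along E and
   along -E until an entry vanishes or a column becomes tight writes W as a
   convex combination of two feasible channels with fewer fractional entries or
   more tight columns, and induction decomposes W into feasible deterministic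
   channels: injective ones for s = 1 (when beta = 0), surjective ones for
   s = -1 (when h = 1). *)

From HB Require Import structures.
From mathcomp Require Import all_boot all_order all_algebra.
From mathcomp Require Import classical_sets reals.
From mathcomp Require Import ring lra zify.
Set Implicit Arguments. Unset Strict Implicit. Unset Printing Implicit Defensive.
Import Order.TTheory GRing.Theory Num.Theory.
Local Open Scope ring_scope.

Lemma exists_kernel_vector (F : fieldType) (X Y : finType) (S : {set X})
    (C : {set Y}) (a : Y -> X -> F) :
  (#|C| < #|S|)%N ->
  exists e : X -> F, [/\ exists x, e x != 0, forall x, x \notin S -> e x = 0
                       & forall y, y \in C -> \sum_x a y x * e x = 0].
Proof.
move=> ltCS; have [x0 x0S] : exists x0, x0 \in S.
  by apply/card_gt0P; apply: leq_ltn_trans ltCS.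
pose A : 'M[F]_(#|S|, #|C|) := \matrix_(k, l) a (enum_val l) (enum_val k).
have : kermx A != 0.
  by rewrite kermx_eq0 /row_free ltn_eqF // (leq_ltn_trans (rank_leq_col A)).
case/rowV0Pn => v /sub_kermxP vA /rV0Pn[k0 vk0].
pose e x := if x \in S then v 0 (enum_rank_in x0S x) else 0.
have eS k : e (enum_val k) = v 0 k by rewrite /e enum_valP enum_valK_in.
exists e; split.
- by exists (enum_val k0); rewrite eS.
- by move=> x /negbTE xS; rewrite /e xS.
move=> y yC; have := congr1 (fun M : 'rV_#|C| => M 0 (enum_rank_in yC y)) vA.
rewrite !mxE => vAy; rewrite -[RHS]vAy (bigID [in S]) /= [X in _ + X]big1 ?addr0.
  rewrite (big_enum_val (fun x => a y x * e x)) /=; apply: eq_bigr => k _.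
  by rewrite eS !mxE enum_rankK_in // mulrC.
by move=> x /negbTE xS; rewrite /e xS mulr0.
Qed.

Lemma card_fractional_gt1 (R : realDomainType) (T : finType) (x : T -> R) t0 :
  (forall t, 0 <= x t) -> \sum_t x t = 1 -> 0 < x t0 < 1 ->
  (1 < #|[set t | (0 < x t < 1)%R]|)%N.
Proof.
move=> x_ge0 x_sum /andP[xt0_gt0 xt0_lt1].
have rest : \sum_(t | t != t0) x t = 1 - x t0.
  by rewrite -x_sum [\sum_t _](bigD1 t0) //= addrC addrK.
have [t1 /andP[t1t0 xt1_gt0]] : exists t1, (t1 != t0) && (0 < x t1).
  by apply: psumr_neq0P => [t _|]; [exact: x_ge0 | rewrite rest; lra].
have : x t1 <= 1 - x t0 by rewrite -rest (bigD1 t1) //= lerDl sumr_ge0.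
move=> xt1_le; apply/card_gt1P; exists t0, t1.
by rewrite !inE xt0_gt0 xt0_lt1 xt1_gt0 eq_sym t1t0; split=> //; lra.
Qed.

Lemma card_pairsE (T1 T2 : finType) (F : {set T1 * T2}) :
  #|F| = (\sum_i \sum_j ((i, j) \in F))%N.
Proof.
rewrite -sum1_card big_mkcond pair_bigA /=.
by apply: eq_bigr => -[i j] _; case: ((i, j) \in F).
Qed.

Lemma card_pairs_rows (T1 T2 : finType) (F : {set T1 * T2}) :
  #|F| = (\sum_i #|[set j | (i, j) \in F]|)%N.
Proof.
rewrite card_pairsE; apply: eq_bigr => i _.
by rewrite -sum1_card [RHS]big_mkcond /=; apply: eq_bigr => j _; rewrite inE.
Qed.

Lemma card_pairs_cols (T1 T2 : finType) (F : {set T1 * T2}) :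
  #|F| = (\sum_j #|[set i | (i, j) \in F]|)%N.
Proof.
rewrite card_pairsE exchange_big; apply: eq_bigr => j _.
by rewrite -sum1_card [RHS]big_mkcond /=; apply: eq_bigr => i _; rewrite inE.
Qed.

Section PairSums.
Variables (R : pzSemiRingType) (T1 T2 : finType) (G : T1 * T2 -> R).

Lemma sum_pair_fst i : \sum_x (x.1 == i)%:R * G x = \sum_j G (i, j).
Proof.
rewrite (eq_bigr (fun x => (x.1 == i)%:R * G (x.1, x.2))) => [|[] //].
rewrite -(pair_bigA _ (fun i' j => (i' == i)%:R * G (i', j))) (bigD1 i) //=.
rewrite [X in _ + X]big1 => [|i' /negbTE i'i]; last first.
  by rewrite big1 // => j _; rewrite i'i mul0r.
by rewrite addr0; apply: eq_bigr => j _; rewrite eqxx mul1r.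
Qed.

Lemma sum_pair_snd j : \sum_x (x.2 == j)%:R * G x = \sum_i G (i, j).
Proof.
rewrite (eq_bigr (fun x => (x.2 == j)%:R * G (x.1, x.2))) => [|[] //].
rewrite -(pair_bigA _ (fun i j' => (j' == j)%:R * G (i, j'))).
apply: eq_bigr => i _.
rewrite (bigD1 j) //= eqxx mul1r big1 ?addr0 // => j' /negbTE ->.
by rewrite mul0r.
Qed.

End PairSums.

Lemma exists_mx_zero_sums (F : fieldType) (m n : nat) (S : {set 'I_m * 'I_n})
    (Rs : {set 'I_m}) (Cs : {set 'I_n}) :
  (#|Rs| + #|Cs| < #|S|)%N ->
  exists E : 'M[F]_(m, n), [/\ E != 0, forall i j, (i, j) \notin S -> E i j = 0,
    forall i, i \in Rs -> \sum_j E i j = 0 & forall j, j \in Cs -> \sum_i E i j = 0].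
Proof.
move=> ltS; pose C := (inl @: Rs) :|: (inr @: Cs).
pose a (y : 'I_m + 'I_n) (x : 'I_m * 'I_n) : F :=
  match y with inl i => (x.1 == i)%:R | inr j => (x.2 == j)%:R end.
have ltC : (#|C| < #|S|)%N.
  apply: leq_ltn_trans ltS; rewrite cardsU (leq_trans (leq_subr _ _)) //.
  by rewrite leq_add ?leq_imset_card.
have [e [[x ex] e0 eC]] := exists_kernel_vector a ltC.
exists (\matrix_(i, j) e (i, j)); split.
- by apply/matrix0Pn; exists x.1, x.2; rewrite mxE; case: x ex.
- by move=> i j ijS; rewrite mxE e0.
- move=> i iRs; have /eC : inl i \in C by rewrite !inE imset_f.
  by rewrite /= sum_pair_fst => h; rewrite -[RHS]h; apply: eq_bigr => j _; rewrite mxE.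
- move=> j jCs; have /eC : inr j \in C by rewrite !inE imset_f ?orbT.
  by rewrite /= sum_pair_snd => h; rewrite -[RHS]h; apply: eq_bigr => i _; rewrite mxE.
Qed.

Lemma card_lines_lt (T1 T2 : finType) (S : {set T1 * T2}) (Rs : {set T1})
    (Cs : {set T2}) j0 :
  (forall i, i \in Rs -> 1 < #|[set j | (i, j) \in S]|)%N ->
  (forall j, j \in Cs -> 1 < #|[set i | (i, j) \in S]|)%N ->
  [exists i, (i, j0) \in S] ->
  (#|Rs| + #|Cs :\ j0| < #|S|)%N.
Proof.
move=> rowsRs colsCs /existsP[i0 i0j0S]; set N := #|S|.
have rowsS : (2 * #|Rs| <= N)%N.
  rewrite /N card_pairs_rows (bigID [in Rs]) /= mulnC -sum_nat_const.
  by apply: leq_trans (leq_addr _ _); apply: leq_sum => i /rowsRs.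
have colsS : (2 * #|Cs| + (j0 \notin Cs) <= N)%N.
  rewrite /N card_pairs_cols (bigID [in Cs]) /= mulnC -sum_nat_const.
  apply: leq_add; first by apply: leq_sum => j /colsCs.
  case: (boolP (j0 \in Cs)) => //= j0Cs; rewrite (bigD1 j0) //=.
  apply: leq_trans (leq_addr _ _); rewrite card_gt0.
  by apply/set0Pn; exists i0; rewrite inE.
have N_gt0 : (0 < N)%N by apply/card_gt0P; exists (i0, j0).
rewrite (cardsD1 j0 Cs) in colsS; case: (j0 \in Cs) colsS => /= colsS; lia.
Qed.

Lemma mul_detmx (R : realType) m n p (f : {ffun 'I_m -> 'I_n}) (B : 'M[R]_(n, p)) :
  detmx R f *m B = rowsub f B.
Proof.
apply/matrixP => i k; rewrite !mxE (bigD1 (f i)) //= mxE eqxx mul1r.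
by rewrite big1 ?addr0 // => j /negbTE; rewrite mxE eq_sym => ->; rewrite mul0r.
Qed.

Section DeterministicChannels.
Variables (R : realType) (m n : nat).
Implicit Types (f : {ffun 'I_m -> 'I_n}) (W : 'M[R]_(m, n)).

Lemma rank_detmx_injective f : \rank (detmx R f) = m <-> injective f.
Proof.
split=> [/eqP/row_freeP[B] | f_inj].
  rewrite mul_detmx => /matrixP fB i i' fii'; apply/eqP.
  have := fB i' i'; have := fB i i'; rewrite !mxE fii' eqxx => ->.
  by case: eqP => // _ /eqP; rewrite eq_sym oner_eq0.
apply/eqP/row_freeP; exists (detmx R f)^T; rewrite mul_detmx.
by apply/matrixP => i k; rewrite !mxE (inj_eq f_inj) eq_sym.
Qed.

Lemma rank_detmx_surjective f :
  \rank (detmx R f) = n <-> forall j, exists i, f i = j.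
Proof.
split=> [/eqP/row_fullP[B /matrixP BD] j | f_surj].
  have [i /eqP | fj] := pickP (fun i => f i == j); first by exists i.
  have := BD j j; rewrite !mxE eqxx big1 => [/eqP|i _]; first by rewrite eq_sym oner_eq0.
  by rewrite mxE fj mulr0.
have [g fgK] := fin_all_exists f_surj.
apply/eqP/row_fullP; exists (detmx R [ffun j => g j]); rewrite mul_detmx.
by apply/matrixP => j k; rewrite !mxE ffunE fgK.
Qed.

Lemma colsum_detmx f j : colsum (detmx R f) j = #|[set i | f i == j]|%:R.
Proof.
rewrite /colsum -sum1_card natr_sum [RHS]big_mkcond /=.
by apply: eq_bigr => i _; rewrite !mxE inE; case: (f i == j).
Qed.

Lemma injective_colsum_detmx f :
  injective f <-> forall j, colsum (detmx R f) j <= 1.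
Proof.
split=> [f_inj j | col_le1 i i' fii'].
  rewrite colsum_detmx lern1; apply/card_le1_eqP => i i'.
  by rewrite !inE => /eqP <- /eqP /f_inj.
have := col_le1 (f i); rewrite colsum_detmx lern1 => /card_le1_eqP.
by apply; rewrite inE ?fii'.
Qed.

Lemma surjective_colsum_detmx f :
  (forall j, exists i, f i = j) <-> forall j, 1 <= colsum (detmx R f) j.
Proof.
split=> [f_surj j | col_ge1 j].
  have [i fij] := f_surj j; rewrite colsum_detmx ler1n.
  by apply/card_gt0P; exists i; rewrite inE fij.
have := col_ge1 j; rewrite colsum_detmx ler1n => /card_gt0P[i].
by rewrite inE => /eqP; exists i.
Qed.

End DeterministicChannels.

Section Decompositions.
Variables (R : realType) (m n : nat).
Implicit Types (f : {ffun 'I_m -> 'I_n}) (W : 'M[R]_(m, n))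
  (l : {ffun {ffun 'I_m -> 'I_n} -> R}).

Lemma in_Lambda_detmx f : in_Lambda (detmx R f) [ffun g => (g == f)%:R].
Proof.
split; first by move=> g; rewrite ffunE ler0n.
split; rewrite (bigD1 f) //= ffunE eqxx ?scale1r big1 ?addr0 // => g /negbTE gf.
  by rewrite ffunE gf.
by rewrite ffunE gf scale0r.
Qed.

Lemma in_Lambda_convex a W1 W2 l1 l2 : 0 <= a <= 1 ->
  in_Lambda W1 l1 -> in_Lambda W2 l2 ->
  in_Lambda (a *: W1 + (1 - a) *: W2) [ffun f => a * l1 f + (1 - a) * l2 f].
Proof.
move=> /andP[a_ge0 a_le1] [l1_ge0 [l1_sum ->]] [l2_ge0 [l2_sum ->]].
split; first by move=> f; rewrite ffunE addr_ge0 ?mulr_ge0 ?subr_ge0.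
split.
  rewrite (eq_bigr _ (fun f _ => ffunE _ f)) big_split /= -!mulr_sumr.
  by rewrite l1_sum l2_sum !mulr1 addrC subrK.
rewrite !scaler_sumr -big_split /=; apply: eq_bigr => f _.
by rewrite ffunE [RHS]scalerDl !scalerA.
Qed.

Lemma entry_in_Lambda W l i j : in_Lambda W l -> W i j = \sum_f l f * (f i == j)%:R.
Proof. by case=> _ [_ ->]; rewrite summxE; apply: eq_bigr => f _; rewrite !mxE. Qed.

Lemma colsum_in_Lambda W l j :
  in_Lambda W l -> colsum W j = \sum_f l f * colsum (detmx R f) j.
Proof.
case=> _ [_ ->]; rewrite /colsum; under eq_bigr do rewrite summxE.
rewrite exchange_big /=; apply: eq_bigr => f _; rewrite mulr_sumr.
by apply: eq_bigr => i _; rewrite !mxE.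
Qed.

Lemma in_Lambda_support W l f i : in_Lambda W l -> l f != 0 -> W i (f i) != 0.
Proof.
move=> Wl lf0; have [l_ge0 _] := Wl; rewrite (entry_in_Lambda i (f i) Wl).
rewrite (bigD1 f) //= eqxx mulr1 paddr_eq0 ?(negbTE lf0) //.
by apply: sumr_ge0 => g _; rewrite mulr_ge0.
Qed.

Lemma P_lambda_compl W l r : in_Lambda W l ->
  P_lambda l r = 1 - \sum_(f | \rank (detmx R f) != r) l f.
Proof.
by case=> _ [l_sum _]; rewrite -l_sum (bigID (fun f => \rank (detmx R f) == r)) addrK.
Qed.

Lemma P_lambda_le1 W l r : in_Lambda W l -> P_lambda l r <= 1.
Proof.
move=> Wl; have [l_ge0 _] := Wl; rewrite (P_lambda_compl r Wl) gerBl.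
exact: sumr_ge0.
Qed.

Lemma Pbar_le W r x : (exists l, in_Lambda W l) ->
  (forall l, in_Lambda W l -> P_lambda l r <= x) -> Pbar W r <= x.
Proof.
move=> [l Wl] P_le; apply: ge_sup; first by exists (P_lambda l r), l.
by move=> y [l' [Wl' ->]]; apply: P_le.
Qed.

Lemma Pbar_eq1 W l r : in_Lambda W l ->
  (forall f, l f != 0 -> \rank (detmx R f) = r) -> Pbar W r = 1.
Proof.
move=> Wl l_rank; apply/eqP; rewrite eq_le; apply/andP; split.
  by apply: Pbar_le => [|l']; [exists l | apply: P_lambda_le1].
apply: ub_le_sup; first by exists 1 => y [l' [Wl' ->]]; apply: P_lambda_le1 Wl'.
exists l; split=> //; rewrite (P_lambda_compl r Wl) big1 ?subr0 // => f.
by apply: contraNeq => /l_rank ->.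
Qed.

End Decompositions.

Section Vertices.
Variables (R : realType) (m n : nat).
Implicit Types (W E : 'M[R]_(m, n)).

Definition fractional W : {set 'I_m * 'I_n} := [set x | 0 < W x.1 x.2 < 1].

Definition loose W : {set 'I_n} := [set j | colsum W j != 1].

Definition admissible W E := [/\ forall i j, (i, j) \notin fractional W -> E i j = 0,
  forall i, \sum_j E i j = 0 & forall j, colsum W j = 1 -> colsum E j = 0].

Lemma channel_le1 W i j : channel W -> W i j <= 1.
Proof.
case=> W_ge0 W_row; rewrite -(W_row i) (bigD1 j) //= lerDl.
by apply: sumr_ge0 => k _.
Qed.

Lemma detmx_of_fractional0 W :
  channel W -> #|fractional W| = 0%N -> exists f, W = detmx R f.
Proof.
move=> Wch /eqP; rewrite cards_eq0 => /eqP F0; have [W_ge0 W_row] := Wch.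
have W01 i j : W i j != 0 -> W i j = 1.
  have : (i, j) \notin fractional W by rewrite F0 inE.
  rewrite inE negb_and -!leNgt => /orP[W_le0 | W_ge1] W0.
    by move: W0; rewrite eq_le W_le0 W_ge0.
  by apply/eqP; rewrite eq_le W_ge1 (channel_le1 i j Wch).
have row_nz i : exists j, W i j != 0.
  have [j | W0] := pickP (fun j => W i j != 0); first by exists j.
  have := W_row i; rewrite big1 => [/eqP | j _]; first by rewrite eq_sym oner_eq0.
  by apply/eqP; rewrite -[_ == _]negbK W0.
have [f Wf] := fin_all_exists row_nz.
exists [ffun i => f i]; apply/matrixP => i j; rewrite !mxE ffunE.
have [<- | fij] := eqVneq (f i) j; first exact: W01.
have : W i j + W i (f i) <= 1.
  rewrite -(W_row i) (bigD1 j) //= (bigD1 (f i)) //= lerD2l lerDl.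
  exact: sumr_ge0.
have [// | /W01 ->] := eqVneq (W i j) 0; rewrite W01 //; lra.
Qed.

Lemma card_fractional_row W i j : channel W -> (i, j) \in fractional W ->
  (1 < #|[set j | (i, j) \in fractional W]|)%N.
Proof.
move=> [W_ge0 W_row]; rewrite inE => Wij.
have -> : [set j | (i, j) \in fractional W] = [set j | 0 < W i j < 1].
  by apply/setP => k; rewrite !inE.
exact: card_fractional_gt1 (W_ge0 i) (W_row i) Wij.
Qed.

Lemma card_fractional_col W i j : channel W -> colsum W j = 1 ->
  (i, j) \in fractional W -> (1 < #|[set i | (i, j) \in fractional W]|)%N.
Proof.
move=> [W_ge0 _] Wj1; rewrite inE => Wij.
have -> : [set i | (i, j) \in fractional W] = [set i | 0 < W i j < 1].
  by apply/setP => k; rewrite !inE.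
exact: card_fractional_gt1 (W_ge0^~ j) Wj1 Wij.
Qed.

Lemma exists_admissible W :
  channel W -> (0 < #|fractional W|)%N -> exists2 E, E != 0 & admissible W E.
Proof.
move=> Wch /card_gt0P[[i0 j0] i0j0F]; set F := fractional W.
pose touched j := [exists i, (i, j) \in F].
pose RF := [set i | [exists j, (i, j) \in F]].
pose TF := [set j | touched j && (colsum W j == 1)].
have rows_RF i : i \in RF -> (1 < #|[set j | (i, j) \in F]|)%N.
  by rewrite inE => /existsP[j]; apply: card_fractional_row Wch.
have cols_TF j : j \in TF -> (1 < #|[set i | (i, j) \in F]|)%N.
  rewrite inE => /andP[/existsP[i ijF] /eqP Wj1].
  exact: card_fractional_col Wch Wj1 ijF.
(* j1 is a loose column meeting F if there is one; otherwise every column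
   meeting F is tight, and the left-out equation of j1 follows from the others
   since the column sums of E add up to its row sums. *)
have [j1 j1F j1_tight] : exists2 j1, touched j1 &
    (colsum W j1 = 1 -> forall j, touched j -> colsum W j = 1).
  have [j /andP[jF jl] | all_tight] := pickP (fun j => touched j && (colsum W j != 1)).
    by exists j => // /eqP; rewrite (negbTE jl).
  exists j0; first by apply/existsP; exists i0.
  by move=> _ j jF; apply/eqP; move: (all_tight j); rewrite jF => /negbFE.
have [E [E0 E_supp E_rows E_cols]] :=
  exists_mx_zero_sums R (card_lines_lt rows_RF cols_TF j1F).
have E_row0 i : \sum_j E i j = 0.
  have [/E_rows // | iRF] := boolP (i \in RF).
  apply: big1 => j _; apply: E_supp; apply: contra iRF => ijF.
  by rewrite inE; apply/existsP; exists j.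
have E_col0 j : ~~ touched j -> colsum E j = 0.
  move=> jF; apply: big1 => i _; apply: E_supp; apply: contra jF => ijF.
  by apply/existsP; exists i.
have E_tight j : colsum W j = 1 -> j != j1 -> colsum E j = 0.
  move=> Wj1 jj1; have [jF | /E_col0 //] := boolP (touched j).
  by apply: E_cols; rewrite !inE jj1 jF Wj1 eqxx.
exists E => //; split=> // j Wj1.
have [jj1 | /(E_tight _ Wj1) //] := eqVneq j j1; rewrite {j}jj1 in Wj1 *.
have : \sum_j colsum E j = 0.
  by rewrite /colsum exchange_big big1.
rewrite (bigD1 j1) //= big1 ?addr0 // => k kj1.
have [kF | /E_col0 //] := boolP (touched k).
by apply: E_tight kj1; apply: j1_tight.
Qed.

Lemma admissibleN W E : admissible W E -> admissible W (- E).
Proof.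
case=> E_supp E_row E_col; split=> [i j /E_supp | i | j /E_col E_col0].
- by rewrite mxE => ->; rewrite oppr0.
- by under eq_bigr do rewrite mxE; rewrite sumrN E_row oppr0.
- rewrite /colsum; under eq_bigr do rewrite mxE.
  by rewrite sumrN -/(colsum E j) E_col0 oppr0.
Qed.

Lemma colsumDZ W E a j : colsum (W + a *: E) j = colsum W j + a * colsum E j.
Proof.
by rewrite /colsum mulr_sumr -big_split; apply: eq_bigr => i _; rewrite !mxE.
Qed.

Lemma exists_neg_entry E :
  E != 0 -> (forall i, \sum_j E i j = 0) -> exists i j, E i j < 0.
Proof.
case/matrix0Pn=> i [j Eij] E_row; exists i.
have [j' | E_ge0] := pickP (fun j => E i j < 0); first by exists j'.
case/negP: Eij; apply/eqP/(psumr_eq0P _ (E_row i)) => // k _.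
by rewrite leNgt E_ge0.
Qed.

Variable s : R.

(* s = 1: column sums at most 1; s = -1: at least 1; s = 0: no constraint. *)
Definition feasible W := channel W /\ forall j, s * (colsum W j - 1) <= 0.

Definition defect W := (#|fractional W| + #|loose W|)%N.

Lemma feasible_shift W E a : feasible W -> (forall i, \sum_j E i j = 0) ->
  0 <= a -> (forall i j, E i j < 0 -> a * - E i j <= W i j) ->
  (forall j, 0 < s * colsum E j -> a * (s * colsum E j) <= s * (1 - colsum W j)) ->
  feasible (W + a *: E).
Proof.
move=> [[W_ge0 W_row] W_col] E_row a_ge0 a_entry a_col.
split; [split=> [i j | i] | move=> j].
- rewrite !mxE; have [/a_entry | E_ge0] := ltP (E i j) 0; first by nra.
  by rewrite addr_ge0 ?mulr_ge0.
- under eq_bigr do rewrite !mxE.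
  by rewrite big_split /= -mulr_sumr W_row E_row mulr0 addr0.
- rewrite colsumDZ; have [/a_col | ] := ltP 0 (s * colsum E j); first by nra.
  by have := W_col j; nra.
Qed.

Lemma exists_max_step W E : feasible W -> E != 0 -> admissible W E ->
  exists2 a, 0 < a & feasible (W + a *: E) /\
    ((exists i j, E i j != 0 /\ W i j + a * E i j = 0) \/
     (exists j, colsum E j != 0 /\ colsum W j + a * colsum E j = 1)).
Proof.
move=> fW E0 [E_supp E_row E_col]; have [_ W_col] := fW.
pose blocking (y : 'I_m * 'I_n + 'I_n) := match y with
  | inl x => E x.1 x.2 < 0 | inr j => 0 < s * colsum E j end.
pose ratio (y : 'I_m * 'I_n + 'I_n) := match y with
  | inl x => W x.1 x.2 / - E x.1 x.2
  | inr j => s * (1 - colsum W j) / (s * colsum E j) end.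
have E_frac i j : E i j != 0 -> 0 < W i j < 1.
  by move=> Eij; apply: contraTT Eij => Wij; apply/negPn/eqP/E_supp; rewrite inE.
have [i0 [j0 Ei0j0]] := exists_neg_entry E0 E_row.
have [y y_blocking y_min] := @arg_minP _ _ _ (inl (i0, j0)) blocking ratio Ei0j0.
have col_blocking j : 0 < s * colsum E j -> (s != 0) && (colsum E j != 0).
  by move=> blocks; rewrite -negb_or -mulf_eq0 gt_eqF.
have a_gt0 : 0 < ratio y.
  case: y y_blocking {y_min} => [[i j] | j] /= blocks.
    have /andP[Wij_gt0 _] := E_frac i j (ltr0_neq0 blocks).
    by rewrite divr_gt0 ?oppr_gt0.
  have /andP[s0 Ej0] := col_blocking j blocks.
  have Wj1 : colsum W j != 1 by apply: contra Ej0 => /eqP /E_col ->.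
  have W_ge : 0 <= s * (1 - colsum W j) by have := W_col j; nra.
  by rewrite divr_gt0 // lt_def W_ge andbT mulf_neq0 // subr_eq0 eq_sym.
exists (ratio y) => //; split.
  apply: feasible_shift => // [| i j Eij | j Ej]; first exact: ltW.
  - by have := y_min (inl (i, j)) Eij; rewrite /= ler_pdivlMr ?oppr_gt0.
  - by have := y_min (inr j) Ej; rewrite /= ler_pdivlMr.
case: y y_blocking {y_min a_gt0} => [[i j] | j] /= blocks.
  left; exists i, j; split; first exact: ltr0_neq0.
  by rewrite mulrAC invrN mulrN mulfK ?subrr // ltr0_neq0.
have /andP[s0 Ej0] := col_blocking j blocks.
by right; exists j; split=> //; field; rewrite s0 Ej0.
Qed.

Lemma feasible_step W E : feasible W -> E != 0 -> admissible W E ->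
  exists2 a, 0 < a & feasible (W + a *: E) /\ (defect (W + a *: E) < defect W)%N.
Proof.
move=> fW E0 EW; have [a a_gt0 [fWa active]] := exists_max_step fW E0 EW.
exists a => //; split=> //; have [E_supp _ E_col] := EW.
have frac_sub : fractional (W + a *: E) \subset fractional W.
  apply/fintype.subsetP => -[i j]; apply: contraTT => ijF; move: (ijF).
  by rewrite !inE /= !mxE (E_supp _ _ ijF) mulr0 addr0.
have loose_sub : loose (W + a *: E) \subset loose W.
  apply/fintype.subsetP => j; rewrite !inE colsumDZ; apply: contra => /eqP Wj1.
  by rewrite E_col // mulr0 addr0 Wj1.
have : (#|fractional (W + a *: E)| < #|fractional W|)%N \/
       (#|loose (W + a *: E)| < #|loose W|)%N.
  case: active => [[i [j [Eij Wij0]]] | [j [Ej0 Wj1]]]; [left | right].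
    apply/proper_card/properP; split=> //; exists (i, j); last first.
      by rewrite inE /= !mxE Wij0 ltxx.
    by apply: contraTT Eij => /E_supp ->; rewrite eqxx.
  apply/proper_card/properP; split=> //; exists j; last first.
    by rewrite inE colsumDZ Wj1 eqxx.
  by rewrite inE; apply: contra Ej0 => /eqP /E_col ->.
rewrite /defect; have := subset_leq_card frac_sub.
have := subset_leq_card loose_sub; lia.
Qed.

Theorem feasible_decomposition W : feasible W ->
  exists2 l, in_Lambda W l & forall f, l f != 0 -> feasible (detmx R f).
Proof.
have [k] := ubnP (defect W); elim: k W => // k IH W; rewrite ltnS => Wk fW.
have [frac0 | frac_gt0] := posnP #|fractional W|.
  have [f Wf] := detmx_of_fractional0 fW.1 frac0; rewrite Wf in fW *.
  exists [ffun g => (g == f)%:R]; first exact: in_Lambda_detmx.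
  by move=> g; rewrite ffunE; case: (eqVneq g f) => [-> // | _]; rewrite eqxx.
have [E E0 EW] := exists_admissible fW.1 frac_gt0.
have [a a_gt0 [fWa Wa_lt]] := feasible_step fW E0 EW.
have NE0 : - E != 0 by rewrite oppr_eq0.
have [b b_gt0 [fWb Wb_lt]] := feasible_step fW NE0 (admissibleN EW).
have [l1 Wl1 l1_feas] := IH _ (leq_trans Wa_lt Wk) fWa.
have [l2 Wl2 l2_feas] := IH _ (leq_trans Wb_lt Wk) fWb.
have ab_gt0 : 0 < a + b by rewrite addr_gt0.
have c01 : 0 <= b / (a + b) <= 1.
  by rewrite divr_ge0 ?ler_pdivrMr ?mul1r ?lerDr // ltW.
have Wc : W = b / (a + b) *: (W + a *: E) + (1 - b / (a + b)) *: (W + b *: - E).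
  by apply/matrixP => i j; rewrite !mxE; field; rewrite gt_eqF.
move: (in_Lambda_convex c01 Wl1 Wl2); rewrite -Wc => Wl.
exists [ffun f => b / (a + b) * l1 f + (1 - b / (a + b)) * l2 f] => // f.
rewrite ffunE.
have [l1f0 | /l1_feas //] := eqVneq (l1 f) 0.
have [l2f0 | /l2_feas //] := eqVneq (l2 f) 0.
by rewrite l1f0 l2f0 !mulr0 addr0 eqxx.
Qed.

End Vertices.

Section Bounds.
Variables (R : realType) (m n : nat).
Implicit Types (W : 'M[R]_(m, n)) (l : {ffun {ffun 'I_m -> 'I_n} -> R}).

Lemma colweightE W j : colweight W j = #|[set i | W i j != 0]|.
Proof. by apply: eq_card => i; rewrite inE; apply/idP/idP => [/set_mem | /mem_set]. Qed.

Lemma colsum_detmx_le_colweight W l f j : in_Lambda W l -> l f != 0 ->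
  colsum (detmx R f) j <= (colweight W j)%:R.
Proof.
move=> Wl lf0; rewrite colsum_detmx colweightE ler_nat subset_leq_card //.
by apply/fintype.subsetP => i; rewrite !inE => /eqP <-; apply: in_Lambda_support Wl lf0.
Qed.

Lemma beta_le_compl_P_lambda W l : in_Lambda W l -> beta W <= 1 - P_lambda l m.
Proof.
move=> Wl; have [l_ge0 _] := Wl; have P_le1 := P_lambda_le1 m Wl.
apply: bigmax_le => [|j _]; first by rewrite subr_ge0.
rewrite /beta'; case: ifP => [w_gt1 | _]; last by rewrite subr_ge0.
have col_le : colsum W j <= P_lambda l m + (colweight W j)%:R * (1 - P_lambda l m).
  rewrite (colsum_in_Lambda j Wl) (bigID (fun f => \rank (detmx R f) == m)) /=.
  apply: lerD.
    apply: ler_sum => f /eqP /rank_detmx_injective /injective_colsum_detmx col_le1.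
    by apply: ler_piMr; [exact: l_ge0 | exact: col_le1].
  rewrite (P_lambda_compl m Wl) subKr mulr_sumr; apply: ler_sum => f _.
  have [-> | lf0] := eqVneq (l f) 0; first by rewrite !mulr0 mul0r.
  by rewrite mulrC ler_wpM2r // (colsum_detmx_le_colweight _ Wl).
have w_gt1' : 1 < (colweight W j)%:R :> R by rewrite ltr1n.
by rewrite ler_pdivrMr ?subr_gt0 //; nra.
Qed.

Lemma P_lambda_le_hval W l : in_Lambda W l -> P_lambda l n <= hval W.
Proof.
move=> Wl; have [l_ge0 _] := Wl.
apply: le_bigmin => [|j _]; first exact: P_lambda_le1 Wl.
rewrite (colsum_in_Lambda j Wl) (bigID (fun f => \rank (detmx R f) == n)) /=.
rewrite -[P_lambda l n]addr0; apply: lerD.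
  apply: ler_sum => f /eqP /rank_detmx_surjective /surjective_colsum_detmx col_ge1.
  by apply: ler_peMr; [exact: l_ge0 | exact: col_ge1].
by apply: sumr_ge0 => f _; rewrite mulr_ge0 // colsum_detmx ler0n.
Qed.

Lemma colsum_le1_of_beta' W j : channel W -> beta' W j <= 0 -> colsum W j <= 1.
Proof.
move=> Wch; rewrite /beta'; case: ifP => [w_gt1 | w_le1 _].
  by rewrite ler_pdivrMr ?subr_gt0 ?ltr1n // mul0r subr_le0.
have [i0 Wi0j | W0] := pickP (fun i => W i j != 0); last first.
  by rewrite /colsum big1 ?ler01 // => i _; apply/eqP/negbFE/W0.
rewrite /colsum (bigD1 i0) //= big1 ?addr0 => [|i ii0]; first exact: channel_le1.
apply/eqP; apply: contraNT ii0 => Wij; apply/eqP.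
move: w_le1; rewrite colweightE => /negbT; rewrite -leqNgt => /card_le1_eqP.
by apply; rewrite inE.
Qed.

End Bounds.

Theorem proposition9 (R : realType) (m n : nat) (W : 'M[R]_(m, n)) :
  (2 <= m)%N -> (2 <= n)%N -> channel W ->
  ((m <= n)%N -> Pbar W m <= 1 - beta W /\ (beta W = 0 -> Pbar W m = 1)) /\
  ((n <= m)%N -> Pbar W n <= hval W /\ (hval W = 1 -> Pbar W n = 1)).
Proof.
move=> _ _ Wch.
have Lambda_W : exists l, in_Lambda W l.
  have fW : feasible 0 W by split=> // j; rewrite mul0r.
  by have [l Wl _] := feasible_decomposition fW; exists l.
split=> _; split.
- by apply: Pbar_le => // l /beta_le_compl_P_lambda; lra.
- move=> beta0; have fW : feasible 1 W.
    split=> // j; rewrite mul1r subr_le0; apply: colsum_le1_of_beta' => //.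
    by rewrite -beta0; apply: le_bigmax.
  have [l Wl l_feas] := feasible_decomposition fW.
  apply: (Pbar_eq1 Wl) => f /l_feas[_ f_col].
  by apply/rank_detmx_injective/injective_colsum_detmx => j; have := f_col j; lra.
- by apply: Pbar_le => // l /P_lambda_le_hval.
- move=> h1; have fW : feasible (-1) W.
    split=> // j; have : hval W <= colsum W j by apply: bigmin_le.
    by rewrite h1; lra.
  have [l Wl l_feas] := feasible_decomposition fW.
  apply: (Pbar_eq1 Wl) => f /l_feas[_ f_col].
  by apply/rank_detmx_surjective/surjective_colsum_detmx => j; have := f_col j; lra.
Qed.
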